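(* Let $G\in\mathcal{M}_k(n,s)$ and let $\mathrm{Sh}(G)$ be any $k$-graph obtained from $G$ by a finite sequence of shifts $\mathrm{sh}_{ij}$ (with $i<j$) which is invariant under all shifts, i.e. $\mathrm{sh}_{ij}(\mathrm{Sh}(G))=\mathrm{Sh}(G)$ for all vertices $i<j$. Then: (i) $\mathrm{Sh}(G)\in\mathcal{M}_k(n,s)$; (ii) if $n\neq 2k$ and $\mathrm{Sh}(G)\in\mathrm{Cov}_k(n,s)$, then $G\in\mathrm{Cov}_k(n,s)$; (iii) if $n\neq 2k$ and $\mathrm{Sh}(G)\in\mathrm{Cl}_k(n,s)$, then $G\in\mathrm{Cl}_k(n,s)$.
   Context: A $k$-uniform hypergraph ($k$-graph) $G=(V,E)$ consists of a finite vertex set $V\subseteq\mathbb{N}$ and a family $E$ of $k$-element subsets of $V$ (edges). A matching is a family of pairwise disjoint edges; $\mu(G)$ is the size of a largest matching in $G$. Let $\mathcal{H}_k(n,s)$ be the set of all $k$-graphs $G=(V,E)$ with $|V|=n$ and $\mu(G)=s$; let $\mu_k(n,s)=\max\{|E(G)|: G\in\mathcal{H}_k(n,s)\}$ and $\mathcal{M}_k(n,s)=\{G\in\mathcal{H}_k(n,s): |E(G)|=\mu_k(n,s)\}$. $\mathrm{Cov}_k(n,s)$ is the family of $k$-graphs $G=(V,E)$ with $|V|=n$ such that for some $S\subseteq V$ with $|S|=s$, $E=\{e\subseteq V: |e|=k,\ e\cap S\neq\emptyset\}$. $\mathrm{Cl}_k(n,s)$ is the family of $k$-graphs $G=(V,E)$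 with $|V|=n$ such that for some $T\subseteq V$ with $|T|=ks+k-1$, $E=\{e\subseteq T: |e|=k\}$. For vertices $i<j$, the $(i,j)$-shift $\mathrm{sh}_{ij}(G)$ is the $k$-graph on $V$ obtained from $G$ by replacing each edge $e\in E$ with $j\in e$, $i\notin e$ and $(e\setminus\{j\})\cup\{i\}\notin E$ by the set $(e\setminus\{j\})\cup\{i\}$ (all other edges are kept). *)

From HB Require Import structures.
From mathcomp Require Import all_boot.
From mathcomp Require Import finmap.
Set Implicit Arguments. Unset Strict Implicit. Unset Printing Implicit Defensive.
Local Open Scope fset_scope.

Definition is_kgraph (k : nat) (V : {fset nat}) (E : {fset {fset nat}}) : Prop :=
  forall e, e \in E -> e `<=` V /\ #|` e| = k.

Definition is_matching (E M : {fset {fset nat}}) : Prop :=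
  M `<=` E /\ (forall e f, e \in M -> f \in M -> e != f -> [disjoint e & f]).

Definition matching_number (E : {fset {fset nat}}) (s : nat) : Prop :=
  (exists M, is_matching E M /\ #|` M| = s) /\
  (forall M, is_matching E M -> #|` M| <= s).

Definition in_H (k n s : nat) (V : {fset nat}) (E : {fset {fset nat}}) : Prop :=
  is_kgraph k V E /\ #|` V| = n /\ matching_number E s.

Definition in_M (k n s : nat) (V : {fset nat}) (E : {fset {fset nat}}) : Prop :=
  in_H k n s V E /\
  (forall V' E', in_H k n s V' E' -> #|` E'| <= #|` E|).

Definition in_Cov (k n s : nat) (V : {fset nat}) (E : {fset {fset nat}}) : Prop :=
  #|` V| = n /\
  exists S : {fset nat}, S `<=` V /\ #|` S| = s /\
    (forall e : {fset nat},
        e \in E <-> (e `<=` V /\ #|` e| = k /\ e `&` S != fset0)).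

Definition in_Cl (k n s : nat) (V : {fset nat}) (E : {fset {fset nat}}) : Prop :=
  #|` V| = n /\
  exists T : {fset nat}, T `<=` V /\ #|` T| = k * s + k - 1 /\
    (forall e : {fset nat}, e \in E <-> (e `<=` T /\ #|` e| = k)).

Definition shift_edge (i j : nat) (E : {fset {fset nat}}) (e : {fset nat}) : {fset nat} :=
  if [&& j \in e, i \notin e & (i |` (e `\ j)) \notin E] then i |` (e `\ j) else e.

Definition sh (i j : nat) (E : {fset {fset nat}}) : {fset {fset nat}} :=
  [fset shift_edge i j E e | e in E].

Definition sh_seq (ps : seq (nat * nat)) (E : {fset {fset nat}}) : {fset {fset nat}} :=
  foldl (fun E' p => sh p.1 p.2 E') E ps.

Definition valid_shifts (V : {fset nat}) (ps : seq (nat * nat)) : Prop :=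
  forall p, p \in ps -> [/\ p.1 \in V, p.2 \in V & p.1 < p.2].

From HB Require Import structures.
From mathcomp Require Import all_boot.
From mathcomp Require Import finmap.
From mathcomp Require Import zify.
From Stdlib Require Import Classical.
Local Open Scope fset_scope.
Set Implicit Arguments. Unset Strict Implicit. Unset Printing Implicit Defensive.

(* A shift sh_ij keeps the number of edges and does not increase the matching
   number (a matching of sh_ij(F), or its image under the transposition (i j),
   is a matching of F), so by maximality it preserves M_k(n,s); hence it is
   enough to pull Cov and Cl back through a single shift.  If sh_ij(F) is F or
   the (i j)-image of F this is immediate.  Otherwise the shifted family has
   edges i + R1 in F and i + R2 not in F, with R1, R2 among the (k-1)-subsets
   of a set W of free vertices that all give edges i + R of sh_ij(F).  As the
   Kneser graph on W is connected, some disjoint A, B have i + A in F and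
   i + B not in F; then j + B is in F, and these two edges extend s - 1
   disjoint edges of sh_ij(F) avoiding i and j to a matching of size s + 1.
   For Cl with s = 1 the Kneser graph is a perfect matching, and instead the
   star at i beats the clique on 2k - 1 vertices when n > 2k. *)

Lemma ex_max_bounded (P : nat -> Prop) b : P 0 -> (forall m, P m -> m <= b) ->
  exists m, P m /\ forall m', P m' -> m' <= m.
Proof.
elim: b P => [|b IH] P P0 Pb; first by exists 0; split=> // m /Pb.
case: (classic (P b.+1)) => [Pb1|nPb1]; first by exists b.+1.
apply: IH => // m Pm; move: (Pb _ Pm); rewrite leq_eqVlt => /orP [/eqP Em|//].
by move: Pm; rewrite Em.
Qed.

Lemma cardfsU_disjoint (K : choiceType) (A B : {fset K}) :
  [disjoint A & B] -> #|` A `|` B| = (#|` A| + #|` B|)%N.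
Proof. by move=> dAB; apply/eqP; rewrite (leq_card_fsetU A B).2. Qed.

Lemma ex_fsubset_card (A : {fset nat}) t : t <= #|` A| -> exists2 B, B `<=` A & #|` B| = t.
Proof.
elim: t => [|t IH] tA; first by exists fset0; rewrite ?fsub0set ?cardfs0.
have [B BA Bt] := IH (ltnW tA).
have /fset0Pn [x /fsetDP [xA xB]] : A `\` B != fset0.
  by rewrite -cardfs_eq0 cardfsDS // Bt subn_eq0 -ltnNge.
by exists (x |` B); rewrite ?fsubUset ?fsub1set ?xA ?BA // cardfsU1 xB Bt.
Qed.

Lemma neq0_fsetU1 (x : nat) (X : {fset nat}) : x |` X != fset0.
Proof. by apply/fset0Pn; exists x; exact: fset1U1. Qed.

Lemma card_fsetD1_pred (K : choiceType) (A : {fset K}) x k : x \in A -> #|` A| = k -> #|` A `\ x| = k.-1.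
Proof. by move=> xA; rewrite (cardfsD1 x A) xA => <-. Qed.

Definition swap (i j x : nat) : nat := if x == i then j else if x == j then i else x.

Definition swapset (i j : nat) (e : {fset nat}) : {fset nat} := [fset swap i j x | x in e].

Section Swap.
Variables i j : nat.

Lemma swapK : involutive (swap i j).
Proof.
move=> x; rewrite /swap; case: (x =P i) => [->|xi].
  by case: (j =P i) => [->|]; rewrite ?eqxx.
case: (x =P j) => [->|xj]; first by rewrite eqxx.
by move/eqP/negPf: xi => ->; move/eqP/negPf: xj => ->.
Qed.

Lemma in_swapset x e : (x \in swapset i j e) = (swap i j x \in e).
Proof. by rewrite -{1}(swapK x) mem_imfset //; exact: inv_inj swapK. Qed.

Lemma swapsetK : involutive (swapset i j).
Proof. by move=> e; apply/fsetP => x; rewrite !in_swapset swapK. Qed.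

Lemma card_swapset e : #|` swapset i j e| = #|` e|.
Proof. by rewrite card_imfset //; exact: inv_inj swapK. Qed.

Lemma swapset_fsubsetl e T : (swapset i j e `<=` T) = (e `<=` swapset i j T).
Proof.
apply/fsubsetP/fsubsetP => sub x.
  by move=> xe; rewrite in_swapset; apply: sub; rewrite in_swapset swapK.
by rewrite in_swapset => /sub; rewrite in_swapset swapK.
Qed.

Lemma fdisjoint_swapsetl e S : [disjoint swapset i j e & S] = [disjoint e & swapset i j S].
Proof.
apply/fdisjointP/fdisjointP => dis x.
  by move=> xe; rewrite in_swapset; apply: dis; rewrite in_swapset swapK.
by rewrite in_swapset => /dis; rewrite in_swapset swapK.
Qed.

Lemma swapset_id e : (i \in e) = (j \in e) -> swapset i j e = e.
Proof.
move=> ie; apply/fsetP => x; rewrite in_swapset /swap.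
case: (x =P i) => [->|_]; first by rewrite ie.
by case: (x =P j) => [->|_] //; rewrite ie.
Qed.

Lemma swapset_fsubset e V : i \in V -> j \in V -> (swapset i j e `<=` V) = (e `<=` V).
Proof. by move=> iV jV; rewrite swapset_fsubsetl swapset_id ?iV ?jV. Qed.

Lemma in_swapset_i e : (i \in swapset i j e) = (j \in e).
Proof. by rewrite in_swapset /swap eqxx. Qed.

Hypothesis ij : i != j.

Lemma swapset_ij e : i \in e -> j \notin e -> swapset i j e = j |` (e `\ i).
Proof.
move=> ie je; apply/fsetP => x; rewrite in_swapset /swap !inE.
case: (x =P i) => [->|xi]; first by rewrite (negPf je) (negPf ij).
by case: (x =P j) => [->|xj] /=; [rewrite ie | ].
Qed.

Lemma swapset_ji e : j \in e -> i \notin e -> swapset i j e = i |` (e `\ j).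
Proof.
move=> je ie; apply/fsetP => x; rewrite in_swapset /swap !inE.
case: (x =P i) => [->|xi]; first by rewrite je (negPf ij).
by case: (x =P j) => [->|xj] /=; [rewrite (negPf ie) | ].
Qed.

Lemma in_swapset_j e : (j \in swapset i j e) = (i \in e).
Proof. by rewrite in_swapset /swap eq_sym (negPf ij) eqxx. Qed.

End Swap.

Section Shift.
Variables (i j : nat) (F : {fset {fset nat}}).
Hypothesis ij : i != j.

Lemma shift_edgeE e : shift_edge i j F e =
  if [&& j \in e, i \notin e & swapset i j e \notin F] then swapset i j e else e.
Proof.
rewrite /shift_edge; case: (boolP (j \in e)) => //= je.
by case: (boolP (i \in e)) => //= ie; rewrite swapset_ji.
Qed.

Lemma mem_shP e : reflect (exists2 f, f \in F & e = shift_edge i j F f) (e \in sh i j F).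
Proof. exact: imfsetP. Qed.

Lemma shift_edge_cases f : shift_edge i j F f = f \/
  [/\ shift_edge i j F f = swapset i j f, j \in f, i \notin f & swapset i j f \notin F].
Proof. by rewrite shift_edgeE; case: and3P => [[]|_]; [right | left]. Qed.

Lemma mem_sh_same e : (i \in e) = (j \in e) -> (e \in sh i j F) = (e \in F).
Proof.
move=> ije; apply/mem_shP/idP => [[f fF Ee]|eF]; last first.
  by exists e => //; rewrite shift_edgeE ije; case: (j \in e).
subst e; case: (shift_edge_cases f) => [->//|[E jf if_ _]].
by move: ije; rewrite E in_swapset_i // in_swapset_j // jf (negPf if_).
Qed.

Lemma mem_sh_j e : j \in e -> i \notin e ->
  (e \in sh i j F) = (e \in F) && (swapset i j e \in F).
Proof.
move=> je ie; apply/mem_shP/andP => [[f fF Ee]|[eF seF]]; last first.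
  by exists e => //; rewrite shift_edgeE je ie seF.
subst e; case: (shift_edge_cases f) => [E|[E jf if_ _]]; last first.
  by move: ie; rewrite E in_swapset_i jf.
rewrite E in je ie *; split=> //; apply/negPn/negP => nsF.
by move: E; rewrite shift_edgeE je ie nsF /= => E; move: ie; rewrite -E in_swapset_i je.
Qed.

Lemma mem_sh_i e : i \in e -> j \notin e ->
  (e \in sh i j F) = (e \in F) || (swapset i j e \in F).
Proof.
move=> ie je; apply/mem_shP/orP => [[f fF ->]|].
  by case: (shift_edge_cases f) => [->|[-> _ _ _]]; [left | right; rewrite swapsetK].
case: (boolP (e \in F)) => [eF _|eF [//|seF]]; first by exists e; rewrite // shift_edgeE (negPf je).
exists (swapset i j e) => //.
by rewrite shift_edgeE in_swapset_i // in_swapset_j // ie je swapsetK eF.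
Qed.

Lemma card_sh : #|` sh i j F| = #|` F|.
Proof.
rewrite card_in_imfset //= => f g fF gF.
case: (shift_edge_cases f) => [->|[-> _ _ nf]]; case: (shift_edge_cases g) => [->|[-> _ _ ng]] //.
- by move=> E; move: ng; rewrite -E fF.
- by move=> E; move: nf; rewrite E gF.
- exact: (inv_inj (swapsetK i j)).
Qed.

Lemma sh_kgraph k V : i \in V -> j \in V -> is_kgraph k V F -> is_kgraph k V (sh i j F).
Proof.
move=> iV jV kF e /mem_shP [f /kF [fV fk] ->].
by case: (shift_edge_cases f) => [->//|[-> _ _ _]]; rewrite swapset_fsubset // card_swapset.
Qed.

End Shift.

Lemma matching0 F : is_matching F fset0.
Proof. by split=> [|e f]; rewrite ?fsub0set ?inE. Qed.

Lemma matchingS F G M : F `<=` G -> is_matching F M -> is_matching G M.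
Proof. by move=> FG [MF Md]; split=> //; exact: fsubset_trans FG. Qed.

Lemma leq_card_matching F M : is_matching F M -> #|` M| <= #|` F|.
Proof. by case=> MF _; exact: fsubset_leq_card. Qed.

Lemma matchingU1 F M a : is_matching F M -> a \in F -> a != fset0 ->
  (forall e, e \in M -> [disjoint a & e]) ->
  is_matching F (a |` M) /\ #|` a |` M| = #|` M|.+1.
Proof.
move=> [MF Md] aF a0 aM.
have aNM : a \notin M by apply: contra a0 => /aM; rewrite -fsetI_eq0 fsetIid.
split; last by rewrite cardfsU1 aNM.
split; first by rewrite fsubUset fsub1set aF MF.
move=> e f /fset1UP [->|eM] /fset1UP [->|fM]; rewrite ?eqxx //.
- by move=> _; exact: aM.
- by move=> _; rewrite fdisjoint_sym; exact: aM.
- exact: Md.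
Qed.

Lemma matching_fsetD1 F M a : is_matching (a |` F) M -> is_matching F (M `\ a).
Proof.
case=> MF Md; split; last by move=> e f /fsetD1P [_ eM] /fsetD1P [_ fM]; exact: Md.
apply/fsubsetP => e /fsetD1P [ea eM]; move: (fsubsetP MF _ eM).
by rewrite inE in_fset1 (negPf ea).
Qed.

Section ShiftMatching.
Variables (i j : nat) (F : {fset {fset nat}}).
Hypothesis ij : i != j.

Lemma matching_sh_or_swapped M : is_matching (sh i j F) M ->
  M `<=` F \/ [fset swapset i j e | e in M] `<=` F.
Proof.
move=> [MF Md]; case: (boolP (M `<=` F)) => [|/fsubsetPn [e0 e0M e0F]]; first by left.
right; have e0sh := fsubsetP MF _ e0M.
have [ie0 je0] : i \in e0 /\ j \notin e0.
  case: (boolP (i \in e0)) => ie; case: (boolP (j \in e0)) => je //.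
  - by move: e0sh; rewrite mem_sh_same ?ie ?je // (negPf e0F).
  - by move: e0sh; rewrite mem_sh_j // (negPf e0F).
  - by move: e0sh; rewrite mem_sh_same ?(negPf ie) ?(negPf je) // (negPf e0F).
apply/fsubsetP => _ /imfsetP [e eM ->]; have esh := fsubsetP MF _ eM.
case: (e =P e0) => [->|ne]; first by move: e0sh; rewrite mem_sh_i // (negPf e0F).
have /fdisjointP dis := Md _ _ eM e0M (introN eqP ne).
have ie : i \notin e by apply: contraL ie0 => /dis.
case: (boolP (j \in e)) => je; first by move: esh; rewrite mem_sh_j // => /andP [].
by rewrite swapset_id ?(negPf ie) ?(negPf je) // -(mem_sh_same F ij) ?(negPf ie) ?(negPf je).
Qed.

Lemma matching_of_sh M : is_matching (sh i j F) M ->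
  exists2 M', is_matching F M' & #|` M'| = #|` M|.
Proof.
move=> HM; case: (matching_sh_or_swapped HM) => sub.
  by exists M => //; split=> //; case: HM.
exists [fset swapset i j e | e in M]; last by rewrite card_imfset //; exact: (inv_inj (swapsetK i j)).
split=> // _ _ /imfsetP [a aM ->] /imfsetP [b bM ->] ab.
rewrite fdisjoint_swapsetl swapsetK; case: HM => _; apply=> //.
by apply: contraNneq ab => ->.
Qed.

End ShiftMatching.

Lemma matching_number_exists F : exists m, matching_number F m.
Proof.
pose P m := exists M, is_matching F M /\ #|` M| = m.
have P0 : P 0 by exists fset0; split; [exact: matching0 | exact: cardfs0].
have Pb m : P m -> m <= #|` F| by case=> M [HM <-]; exact: leq_card_matching.
have [_ [[M [HM <-]] Mmax]] := ex_max_bounded P0 Pb.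
by exists #|` M|; split=> [|M' HM']; [exists M | apply: Mmax; exists M'].
Qed.

Lemma matching_number_fsetU1 F a m m' :
  matching_number F m -> matching_number (a |` F) m' -> m' <= m.+1.
Proof.
move=> [_ Fmax] [[M [HM <-]] _]; have := Fmax _ (matching_fsetD1 HM).
by rewrite (cardfsD1 a M); case: (a \in M) => /=; lia.
Qed.

Lemma matching_number_grow K F m s : F `<=` K -> matching_number F m -> m < s ->
  (exists M, is_matching K M /\ #|` M| = s) ->
  exists Y, [/\ F `<` Y, Y `<=` K & matching_number Y s].
Proof.
move: {2}#|` K `\` F| (erefl #|` K `\` F|) => d.
elim: d F m => [|d IH] F m dKF FK Fm ms [M [HM Ms]].
  move/eqP: dKF; rewrite cardfs_eq0 fsetD_eq0 => KF.
  by have := Fm.2 M (matchingS KF HM); rewrite Ms leqNgt ms.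
have /fset0Pn [e /fsetDP [eK eF]] : K `\` F != fset0 by rewrite -cardfs_eq0 dKF.
have FeK : e |` F `<=` K by rewrite fsubUset fsub1set eK FK.
have F_Fe : F `<` e |` F.
  by rewrite fproperEneq fsubsetU1 andbT; apply: contraNneq eF => ->; exact: fset1U1.
have [m' Fem'] := matching_number_exists (e |` F).
have m'm := matching_number_fsetU1 Fm Fem'.
case: (m' =P s) => [<-|m's]; first by exists (e |` F).
have dKFe : #|` K `\` (e |` F)| = d.
  have -> : K `\` (e |` F) = (K `\` F) `\ e by apply/fsetP => x; rewrite !inE negb_or andbA.
  by move: dKF; rewrite (cardfsD1 e (K `\` F)) inE eK eF => -[].
have m'_s : m' < s by rewrite ltn_neqAle (introN eqP m's) (leq_trans m'm).
have [Y [FeY YK Ys]] := IH _ _ dKFe FeK Fem' m'_s (ex_intro _ M (conj HM Ms)).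
by exists Y; split=> //; exact: fproper_sub_trans F_Fe (fproper_sub FeY).
Qed.

Definition ksubsets (k : nat) (V : {fset nat}) : {fset {fset nat}} :=
  [fset e in fpowerset V | #|` e| == k].

Lemma in_ksubsets k V e : (e \in ksubsets k V) = (e `<=` V) && (#|` e| == k).
Proof. by rewrite !inE /= fpowersetE. Qed.

Lemma kgraphP k V F : is_kgraph k V F <-> F `<=` ksubsets k V.
Proof.
split=> [kF|/fsubsetP sub e eF].
  by apply/fsubsetP => e /kF [eV ek]; rewrite in_ksubsets eV ek eqxx.
by move: (sub e eF); rewrite in_ksubsets => /andP [-> /eqP].
Qed.

Lemma sh_in_M k n s V F i j : i != j -> i \in V -> j \in V ->
  in_M k n s V F -> in_M k n s V (sh i j F).
Proof.
move=> ij iV jV [[kF [nV [[M [HM Ms]] Fmax]]] Mmax].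
have kshF := sh_kgraph ij iV jV kF.
have [m shFm] := matching_number_exists (sh i j F).
have ms : m <= s.
  by case: shFm => [[M' [HM' <-]] _]; have [M0 HM0 <-] := matching_of_sh ij HM'; exact: Fmax.
case: (m =P s) => [Es|m_s].
  by split=> [|V' E' /Mmax]; rewrite ?card_sh // -Es.
have m_lt_s : m < s by rewrite ltn_neqAle (introN eqP m_s) ms.
have [|Y [shFY YK Ys]] := matching_number_grow (iffLR (kgraphP _ _ _) kshF) shFm m_lt_s.
  by exists M; split=> //; apply: matchingS HM; exact/kgraphP.
have := Mmax V Y (conj (iffRL (kgraphP _ _ _) YK) (conj nV Ys)).
by rewrite -(card_sh F ij) leqNgt fproper_ltn_card.
Qed.

Lemma matching_ksubsets_card k V M : is_matching (ksubsets k V) M -> k * #|` M| <= #|` V|.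
Proof.
case=> MK /trivIfsetP triv.
have Mk A : A \in M -> #|` A| = k by move/(fsubsetP MK); rewrite in_ksubsets => /andP [_ /eqP].
have coverV : fcover M `<=` V.
  apply/fsubsetP => x /bigfcupP [A /andP [AM _] xA].
  by move: (fsubsetP MK _ AM); rewrite in_ksubsets => /andP [/fsubsetP AV _]; exact: AV.
have -> : k * #|` M| = \sum_(A <- M) #|` A|.
  by rewrite [#|` M|]card_fset_sum1 big_distrr; apply: eq_big_seq => A AM; rewrite Mk //= muln1.
apply: leq_trans (fsubset_leq_card coverV); apply/eq_leq/esym/eqP.
by rewrite (leq_card_fcover M).2.
Qed.

Lemma in_M_small k n s V F : in_M k n s V F -> n < s.+1 * k -> F = ksubsets k V.
Proof.
move=> [[kF [nV [[M [HM Ms]] _]]] Fmax] n_small.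
have FK : F `<=` ksubsets k V by exact/kgraphP.
have HK : in_H k n s V (ksubsets k V).
  split; first exact/kgraphP.
  split=> //; split; first by exists M; split=> //; exact: matchingS HM.
  move=> M' /matching_ksubsets_card; rewrite nV => M'n.
  have : k * #|` M'| < k * s.+1 by rewrite mulnC in n_small; exact: leq_ltn_trans n_small.
  by rewrite ltn_mul2l => /andP [_].
by apply/eqP; rewrite eqEfcard FK (Fmax _ _ HK).
Qed.

Lemma sh_ksubsets i j k V : i != j -> i \in V -> j \in V -> sh i j (ksubsets k V) = ksubsets k V.
Proof.
move=> ij iV jV; have mem_swapset_ks e : (swapset i j e \in ksubsets k V) = (e \in ksubsets k V).
  by rewrite !in_ksubsets swapset_fsubset // card_swapset.
apply/fsetP => e; apply/imfsetP/idP => [[f fK ->]|eK]; last first.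
  by exists e => //; rewrite shift_edgeE // mem_swapset_ks eK !andbF.
by rewrite shift_edgeE // mem_swapset_ks fK !andbF.
Qed.

(* For such an edge a, exactly one of a and its swap lies in F; sh_ij(F) is F
   when it is always a, and the swap of F when it is always the swap. *)
Definition split_edge (i j : nat) (F : {fset {fset nat}}) (a : {fset nat}) : bool :=
  [&& i \in a, j \notin a, a \in sh i j F & swapset i j a \notin sh i j F].

Section SplitEdges.
Variables (i j : nat) (F : {fset {fset nat}}).
Hypothesis ij : i != j.

Lemma sh_id_of_split : (forall a, split_edge i j F a -> a \in F) -> sh i j F = F.
Proof.
move=> splitF; apply/fsetP => e.
case: (boolP (i \in e)) => ie; case: (boolP (j \in e)) => je;
  try by rewrite mem_sh_same // ?ie ?je ?(negPf ie) ?(negPf je).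
- rewrite mem_sh_i //; case: (boolP (e \in F)) => //= eF; apply: negbTE; apply/negP => seF.
  case: (boolP (swapset i j e \in sh i j F)) => seshF.
    by move: seshF; rewrite mem_sh_j ?in_swapset_i ?in_swapset_j // swapsetK (negPf eF) andbF.
  by apply: (negP eF); apply: splitF; rewrite /split_edge ie je seshF mem_sh_i // seF orbT.
- rewrite mem_sh_j //; case: (boolP (e \in F)) => //= eF; apply/negPn/negP => seF.
  have seshF : swapset i j e \in sh i j F.
    by rewrite mem_sh_i ?in_swapset_i ?in_swapset_j // swapsetK eF orbT.
  move/negP: (seF); apply; apply: splitF.
  by rewrite /split_edge in_swapset_i in_swapset_j // je ie seshF swapsetK mem_sh_j // (negPf seF) andbF.
Qed.

Lemma sh_swap_of_split : (forall a, split_edge i j F a -> a \notin F) ->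
  forall e, (e \in F) = (swapset i j e \in sh i j F).
Proof.
move=> splitNF e.
case: (boolP (i \in e)) => ie; case: (boolP (j \in e)) => je;
  try by rewrite swapset_id ?mem_sh_same // ?ie ?je ?(negPf ie) ?(negPf je).
- rewrite mem_sh_j ?in_swapset_i ?in_swapset_j // swapsetK andbC.
  case: (boolP (e \in F)) => //= eF; apply/esym/negPn/negP => seF.
  have esh : e \in sh i j F by rewrite mem_sh_i // eF.
  have seNsh : swapset i j e \notin sh i j F.
    by rewrite mem_sh_j ?in_swapset_i ?in_swapset_j // (negPf seF).
  by have := splitNF e; rewrite /split_edge ie je esh seNsh eF => /(_ isT).
- rewrite mem_sh_i ?in_swapset_i ?in_swapset_j // swapsetK orbC.
  case: (boolP (e \in F)) => //= eF; apply/esym/negbTE/negP => seF.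
  have seshF : swapset i j e \in sh i j F.
    by rewrite mem_sh_i ?in_swapset_i ?in_swapset_j // seF.
  have eNsh : e \notin sh i j F by rewrite mem_sh_j // (negPf eF).
  have := splitNF (swapset i j e).
  by rewrite /split_edge in_swapset_i in_swapset_j // je ie seshF swapsetK eNsh seF => /(_ isT).
Qed.

Lemma shift_trichotomy : [\/ sh i j F = F, (forall e, (e \in F) = (swapset i j e \in sh i j F))
  | exists a1 a2, [/\ split_edge i j F a1, a1 \in F, split_edge i j F a2 & a2 \notin F]].
Proof.
pose Sp := [fset a in sh i j F | split_edge i j F a].
have mem_Sp a : (a \in Sp) = split_edge i j F a.
  by rewrite !inE /= andb_idl // => /and4P [].
case: (boolP (Sp `<=` F)) => [/fsubsetP SpF|/fsubsetPn [a2 a2Sp a2F]].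
  by apply: Or31; apply: sh_id_of_split => a; rewrite -mem_Sp => /SpF.
case: (boolP [disjoint Sp & F]%fset) => [/fdisjointP SpNF|].
  by apply: Or32; apply: sh_swap_of_split => a; rewrite -mem_Sp => /SpNF.
rewrite -fsetI_eq0 => /fset0Pn [a1]; rewrite inE => /andP [a1Sp a1F].
by apply: Or33; exists a1, a2; rewrite -!mem_Sp.
Qed.

End SplitEdges.

Section KneserGraph.
Variables (r : nat) (W : {fset nat}) (P : {fset nat} -> Prop).
Hypothesis W_large : 0 < r -> 2 * r + 1 <= #|` W|.
Hypothesis P_disjoint : forall A B, A `<=` W -> B `<=` W -> #|` A| = r -> #|` B| = r ->
  [disjoint A & B] -> P A -> P B.

(* Connectivity of the Kneser graph KG(|W|, r): R is moved to R' one element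
   at a time, and each such step is a path of length two through an r-set
   disjoint from both ends, which exists because |W| >= 2r + 1. *)
Lemma kneser_connected R R' : R `<=` W -> R' `<=` W -> #|` R| = r -> #|` R'| = r -> P R -> P R'.
Proof.
move: {2}#|` R `\` R'| (erefl #|` R `\` R'|) => d.
elim: d R => [|d IH] R dRR' RW R'W Rr R'r PR.
  move/eqP: dRR'; rewrite cardfs_eq0 fsetD_eq0 => RR'.
  suff <- : R = R' by [].
  by apply/eqP; rewrite eqEfcard RR' Rr R'r /=.
have /fset0Pn [x /fsetDP [xR xR']] : R `\` R' != fset0 by rewrite -cardfs_eq0 dRR'.
have dR'R : #|` R' `\` R| = d.+1 by move: dRR'; rewrite !cardfsD fsetIC Rr R'r.
have /fset0Pn [y /fsetDP [yR' yR]] : R' `\` R != fset0 by rewrite -cardfs_eq0 dR'R.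
set R'' := y |` (R `\ x).
have yRx : y \notin R `\ x by rewrite inE negb_and yR orbT.
have R''r : #|` R''| = r by rewrite cardfsU1 yRx; move: Rr; rewrite (cardfsD1 x R) xR.
have R''W : R'' `<=` W.
  by rewrite fsubUset fsub1set (fsubsetP R'W _ yR') (fsubset_trans (fsubD1set _ _) RW).
have dR''R' : #|` R'' `\` R'| = d.
  have -> : R'' `\` R' = (R `\` R') `\ x.
    apply/fsetP => z; rewrite !inE.
    case: (z =P y) => [->|zy] /=; first by rewrite yR' /= andbF.
    by case: (z \in R'); case: (z != x).
  by move: dRR'; rewrite (cardfsD1 x (R `\` R')) inE xR xR' add1n => -[].
apply: (IH R'') => //.
have r0 : 0 < r by move: Rr; rewrite (cardfsD1 x R) xR; lia.
have yRW : y |` R `<=` W by rewrite fsubUset fsub1set (fsubsetP R'W _ yR') RW.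
have [C CW Cr] : exists2 C, C `<=` W `\` (y |` R) & #|` C| = r.
  by apply: ex_fsubset_card; rewrite cardfsDS // cardfsU1 yR Rr; have := W_large r0; lia.
have CW' : C `<=` W := fsubset_trans CW (fsubsetDl _ _).
have disC A : A `<=` y |` R -> [disjoint A & C].
  move=> AyR; apply/fdisjointP => z /(fsubsetP AyR) zyR.
  by apply/negP => /(fsubsetP CW); rewrite inE zyR.
apply: (P_disjoint CW' R''W Cr R''r).
  by rewrite fdisjoint_sym; apply: disC; rewrite fsetUS // fsubD1set.
by apply: (P_disjoint RW CW' Rr Cr) => //; apply: disC; exact: fsubsetU1.
Qed.

End KneserGraph.

Lemma ex_disjoint_ksubsets_meeting k m (X S : {fset nat}) : 0 < k ->
  S `<=` X -> #|` S| = m -> m * k <= #|` X| ->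
  exists M : {fset {fset nat}}, [/\ #|` M| = m,
    (forall e, e \in M -> [/\ e `<=` X, #|` e| = k & e `&` S != fset0]) &
    (forall e f, e \in M -> f \in M -> e != f -> [disjoint e & f])].
Proof.
move=> k0; elim: m X S => [|m IH] X S SX Sm mX.
  by exists fset0; split=> [|e|e f]; rewrite ?cardfs0 ?inE.
have /fset0Pn [x xS] : S != fset0 by rewrite -cardfs_eq0 Sm.
have [R RXS Rk] : exists2 R, R `<=` X `\` S & #|` R| = k.-1.
  by apply: ex_fsubset_card; rewrite cardfsDS // Sm; have := leq_pmulr m k0; move: mX; rewrite mulSn; lia.
have xR : x \notin R by apply/negP => /(fsubsetP RXS); rewrite inE xS.
pose e := x |` R.
have ek : #|` e| = k by rewrite cardfsU1 xR Rk; lia.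
have eX : e `<=` X by rewrite fsubUset fsub1set (fsubsetP SX _ xS) (fsubset_trans RXS) ?fsubsetDl.
have SxXe : S `\ x `<=` X `\` e.
  apply/fsubsetP => y /fsetD1P [yx yS]; rewrite !inE (fsubsetP SX _ yS) andbT negb_or yx /=.
  by apply/negP => /(fsubsetP RXS); rewrite inE yS.
have Sxm : #|` S `\ x| = m by move: Sm; rewrite (cardfsD1 x S) xS => -[].
have mXe : m * k <= #|` X `\` e| by rewrite cardfsDS // ek; move: mX; rewrite mulSn; lia.
have [M [Mm Me Md]] := IH _ _ SxXe Sxm mXe.
have disM f : f \in M -> [disjoint e & f].
  move=> /Me [fXe _ _]; rewrite fdisjoint_sym; apply/fdisjointP => y /(fsubsetP fXe).
  by rewrite inE => /andP [].
have eM : e \notin M.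
  by apply: contraTN (fset1U1 x R) => /disM /fdisjointP /(_ x (fset1U1 x R)) ->.
exists (e |` M); split.
- by rewrite cardfsU1 eM Mm.
- move=> f /fset1UP [->|fM].
    by split=> //; apply/fset0Pn; exists x; rewrite inE fset1U1 xS.
  have [fXe fk /fset0Pn [y]] := Me _ fM; rewrite !inE => /and3P [yf _ yS].
  split=> //; first exact: fsubset_trans fXe (fsubsetDl _ _).
  by apply/fset0Pn; exists y; rewrite inE yS yf.
- move=> a b /fset1UP [->|aM] /fset1UP [->|bM]; rewrite ?eqxx // => ab.
  + exact: disM.
  + by rewrite fdisjoint_sym; exact: disM.
  + exact: Md aM bM ab.
Qed.

Section StarEdges.
Variables (k s i j : nat) (F : {fset {fset nat}}) (W : {fset nat}).
Hypotheses (ij : i != j) (iW : i \notin W) (jW : j \notin W).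
Hypothesis matching_le : forall M, is_matching F M -> #|` M| <= s.
Hypothesis W_large : 0 < k.-1 -> 2 * k.-1 + 1 <= #|` W|.
Hypothesis star_in_sh : forall R, R `<=` W -> #|` R| = k.-1 -> i |` R \in sh i j F.
Hypothesis sh_matching_avoiding : forall Y, Y `<=` W -> #|` Y| = (k.-1 + k.-1)%N ->
  exists M, [/\ is_matching (sh i j F) M, #|` M| = s.-1 &
    forall e, e \in M -> [disjoint i |` (j |` Y) & e]].

Lemma star_in_F_constant R R' : R `<=` W -> R' `<=` W -> #|` R| = k.-1 -> #|` R'| = k.-1 ->
  i |` R \in F -> i |` R' \in F.
Proof.
apply: (kneser_connected (P := fun R => i |` R \in F) W_large) => A B AW BW Ak Bk dAB iAF.
apply/negPn/negP => iBF.
have iNA : i \notin A by apply: contra iW => /(fsubsetP AW).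
have iNB : i \notin B by apply: contra iW => /(fsubsetP BW).
have jNA : j \notin A by apply: contra jW => /(fsubsetP AW).
have jNB : j \notin B by apply: contra jW => /(fsubsetP BW).
have jBF : j |` B \in F.
  have jNiB : j \notin i |` B by rewrite !inE negb_or eq_sym ij.
  move: (star_in_sh BW Bk); rewrite mem_sh_i ?fset1U1 // (negPf iBF) /=.
  by rewrite swapset_ij ?fset1U1 // fsetU1K.
have ABW : A `|` B `<=` W by rewrite fsubUset AW BW.
have ABk : #|` A `|` B| = (k.-1 + k.-1)%N by rewrite cardfsU_disjoint // Ak Bk.
have [M [[MshF Mdis] Ms MAB]] := sh_matching_avoiding ABW ABk.
have MF : is_matching F M.
  split=> //; apply/fsubsetP => e eM; have /fdisjointP eAB := MAB e eM.
  have ie : i \notin e by apply: eAB; rewrite fset1U1.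
  have je : j \notin e by apply: eAB; rewrite !inE eqxx orbT.
  by rewrite -(mem_sh_same F ij) ?(negPf ie) ?(negPf je) //; exact: (fsubsetP MshF).
have jB_sub : j |` B `<=` i |` (j |` (A `|` B)).
  by apply/fsubsetP => x; rewrite !inE => /orP [->|->]; rewrite ?orbT.
have iA_sub : i |` A `<=` i |` (j |` (A `|` B)).
  by apply/fsubsetP => x; rewrite !inE => /orP [->|->]; rewrite ?orbT.
have [M2F M2s] := matchingU1 MF jBF (neq0_fsetU1 _ _) (fun e eM => fdisjointWl jB_sub (MAB e eM)).
have iA_dis e : e \in j |` B |` M -> [disjoint i |` A & e].
  case/fset1UP => [->|eM]; last exact: fdisjointWl iA_sub (MAB e eM).
  by rewrite fdisjointU1X !inE negb_or ij iNB fdisjoint_sym fdisjointU1X jNA fdisjoint_sym.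
have [M3F M3s] := matchingU1 M2F iAF (neq0_fsetU1 _ _) iA_dis.
have := matching_le M3F; rewrite M3s M2s Ms => /leq_trans/(_ (leqSpred s)).
by rewrite ltnn.
Qed.

End StarEdges.

Lemma in_Cov_swapset k n s V F F' i j : i \in V -> j \in V ->
  (forall e, (e \in F) = (swapset i j e \in F')) -> in_Cov k n s V F' -> in_Cov k n s V F.
Proof.
move=> iV jV FF' [nV [S [SV [Ss F'S]]]]; split=> //; exists (swapset i j S).
split; [by rewrite swapset_fsubset | split; first by rewrite card_swapset].
by move=> e; rewrite FF' F'S swapset_fsubset // card_swapset !fsetI_eq0 fdisjoint_swapsetl.
Qed.

Lemma in_Cl_swapset k n s V F F' i j : i \in V -> j \in V ->
  (forall e, (e \in F) = (swapset i j e \in F')) -> in_Cl k n s V F' -> in_Cl k n s V F.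
Proof.
move=> iV jV FF' [nV [T [TV [Tc F'T]]]]; split=> //; exists (swapset i j T).
split; [by rewrite swapset_fsubset | split; first by rewrite card_swapset].
by move=> e; rewrite FF' F'T swapset_fsubsetl card_swapset.
Qed.

Lemma cov_kneser_room n s k : 0 < s -> 0 < k.-1 -> s.+1 * k <= n -> n != 2 * k ->
  2 * k.-1 + 1 <= (n - s).-1.
Proof.
move=> s0 k1 nsk n2k.
case: (s =P 1) => [s1|/eqP s1]; first by subst; lia.
have : 2 * k <= s * k by apply: leq_mul; lia.
have : s * 2 <= s * k by apply: leq_mul; lia.
rewrite mulSn in nsk; lia.
Qed.

Lemma cov_matching_room n s k : 0 < k -> s.+1 * k <= n -> s.-1 * k <= n - (k.-1 + k.-1).+2.
Proof. by case: s => [|s] k0; rewrite !mulSn //=; lia. Qed.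

Section CoverShift.
Variables (k n s : nat) (V S : {fset nat}) (F : {fset {fset nat}}) (i j : nat).
Hypotheses (ij : i != j) (iV : i \in V) (jV : j \in V).
Hypotheses (nV : #|` V| = n) (SV : S `<=` V) (Ss : #|` S| = s).
Hypothesis shFS : forall e, e \in sh i j F <-> e `<=` V /\ #|` e| = k /\ e `&` S != fset0.

Local Notation W := (V `\` S `\ j).

Lemma cover_split_swapset a : split_edge i j F a -> swapset i j a `&` S == fset0.
Proof.
case/and4P => _ _ ash; apply: contraNT => meetS; apply/shFS.
by have [aV [ak _]] := iffLR (shFS a) ash; rewrite swapset_fsubset // card_swapset.
Qed.

Lemma cover_split_sub a : split_edge i j F a -> a `\ i `<=` W.
Proof.
move=> sa; have /and4P [ia ja ash _] := sa; have [aV _] := iffLR (shFS a) ash.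
move/eqP/fsetP: (cover_split_swapset sa); rewrite swapset_ij // => offS.
apply/fsubsetP => x /fsetD1P [xi xa].
have /negbT xS := offS x; rewrite !inE xi xa orbT /= in xS.
by rewrite !inE xS (fsubsetP aV _ xa) !andbT; apply: contraTneq xa => ->.
Qed.

Lemma cover_split_mem a : split_edge i j F a -> i \in S /\ j \notin S.
Proof.
move=> sa; have /and4P [ia _ ash _] := sa; split.
  have [_ [_ /fset0Pn [x]]] := iffLR (shFS a) ash; rewrite inE => /andP [xa xS].
  case: (x =P i) => [<- //|/eqP xi].
  by have := fsubsetP (cover_split_sub sa) x; rewrite !inE xi xa xS andbF => /(_ isT).
move/eqP/fsetP: (cover_split_swapset sa) => /(_ j).
by rewrite in_fset0 in_fsetI in_swapset_j // ia => /negbT.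
Qed.

Hypotheses (k0 : 0 < k) (iS : i \in S) (jS : j \notin S).

Lemma cover_star_in_sh R : R `<=` W -> #|` R| = k.-1 -> i |` R \in sh i j F.
Proof.
move=> RW Rk; have iR : i \notin R by apply: contraL iS => /(fsubsetP RW); rewrite !inE => /and3P [].
have WV : W `<=` V by apply: fsubset_trans (fsubD1set _ _) (fsubsetDl _ _).
apply/shFS; split; first by rewrite fsubUset fsub1set iV (fsubset_trans RW).
split; first by rewrite cardfsU1 Rk iR add1n prednK.
by apply/fset0Pn; exists i; rewrite inE fset1U1.
Qed.

Lemma card_cover_free : #|` W| = (n - s).-1.
Proof. by move: (cardfsD1 j (V `\` S)); rewrite inE jS jV cardfsDS // nV Ss => ->. Qed.

Lemma cover_sh_matching_avoiding : s.+1 * k <= n ->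
  forall Y, Y `<=` W -> #|` Y| = (k.-1 + k.-1)%N ->
  exists M, [/\ is_matching (sh i j F) M, #|` M| = s.-1
    & forall e, e \in M -> [disjoint i |` (j |` Y) & e]].
Proof.
move=> n_large Y YW Yk; pose X := V `\` (i |` (j |` Y)).
have YNS y : y \in Y -> y \notin S by move/(fsubsetP YW); rewrite !inE => /and3P [].
have SX : S `\ i `<=` X.
  apply/fsubsetP => y /fsetD1P [yi yS].
  have yj : y != j by apply: contraTneq yS => ->.
  by rewrite !inE (fsubsetP SV _ yS) !negb_or yi yj (contraL (YNS y) yS).
have Xc : s.-1 * k <= #|` X|.
  have YV : Y `<=` V by apply: fsubset_trans YW (fsubset_trans (fsubD1set _ _) (fsubsetDl _ _)).
  rewrite cardfsDS ?nV; last by rewrite !fsubUset !fsub1set iV jV YV.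
  have jY : j \notin Y by apply: contra (fsubsetP YW j) _; rewrite !inE eqxx.
  rewrite !cardfsU1 Yk !inE negb_or ij (contraL (YNS i) iS) jY /= !add1n.
  exact: cov_matching_room.
have [M [Ms Me Md]] := ex_disjoint_ksubsets_meeting k0 SX (card_fsetD1_pred iS Ss) Xc.
exists M; split=> //.
  split=> //; apply/fsubsetP => e /Me [eX ek eS]; apply/shFS.
  split; first exact: fsubset_trans eX (fsubsetDl _ _).
  split=> //; case/fset0Pn: eS => y; rewrite !inE => /andP [ye /andP [_ yS]].
  by apply/fset0Pn; exists y; rewrite inE ye yS.
move=> e /Me [eX _ _]; apply/fdisjointP => y yZ.
by apply: contraL yZ => /(fsubsetP eX); rewrite in_fsetD => /andP [].
Qed.

End CoverShift.

Lemma sh_Cov k n s V F i j : i != j -> i \in V -> j \in V -> in_M k n s V F -> n != 2 * k ->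
  in_Cov k n s V (sh i j F) -> in_Cov k n s V F.
Proof.
move=> ij iV jV FM n2k shCov.
case: (ltnP n (s.+1 * k)) => [n_small|n_large].
  by move: shCov; rewrite (in_M_small FM n_small) sh_ksubsets.
case: (shift_trichotomy F ij) => [shF|shF|[a1 [a2 [sa1 a1F sa2 a2F]]]].
- by rewrite -shF.
- exact: in_Cov_swapset iV jV shF shCov.
exfalso; case: shCov => nV [S [SV [Ss shFS]]]; case: FM => [[_ [_ [_ matching_le]]] _].
have [iS jS] := cover_split_mem ij iV jV shFS sa1.
have /and4P [ia1 _ a1sh _] := sa1; have /and4P [ia2 _ a2sh _] := sa2.
have [_ [a1k _]] := iffLR (shFS a1) a1sh; have [_ [a2k _]] := iffLR (shFS a2) a2sh.
have k0 : 0 < k by rewrite -a1k cardfs_gt0; apply/fset0Pn; exists i.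
have s0 : 0 < s by rewrite -Ss cardfs_gt0; apply/fset0Pn; exists i.
have iW : i \notin V `\` S `\ j by rewrite !inE iS andbF.
have jW : j \notin V `\` S `\ j by rewrite !inE eqxx.
have W_large : 0 < k.-1 -> 2 * k.-1 + 1 <= #|` V `\` S `\ j|.
  by move=> k1; rewrite (card_cover_free jV nV SV Ss jS); exact: cov_kneser_room.
have := star_in_F_constant ij iW jW matching_le W_large (cover_star_in_sh iV shFS k0 iS)
  (cover_sh_matching_avoiding ij iV jV nV SV Ss shFS k0 iS jS n_large)
  (cover_split_sub ij iV jV shFS sa1) (cover_split_sub ij iV jV shFS sa2)
  (card_fsetD1_pred ia1 a1k) (card_fsetD1_pred ia2 a2k).
by rewrite !fsetD1K // a1F (negPf a2F) => /(_ isT).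
Qed.

Definition star (k : nat) (V : {fset nat}) (i : nat) : {fset {fset nat}} :=
  [fset e in ksubsets k V | i \in e].

Lemma in_star k V i e : (e \in star k V i) = [&& e `<=` V, #|` e| == k & i \in e].
Proof. by rewrite !inE /= fpowersetE andbA. Qed.

Lemma star_in_H k V i : 0 < k -> i \in V -> k <= #|` V| -> in_H k #|` V| 1 V (star k V i).
Proof.
move=> k0 iV kV; split.
  by apply/kgraphP/fsubsetP => e; rewrite in_star in_ksubsets => /and3P [-> ->].
split=> //; split.
  have [D DV Dk] : exists2 D, D `<=` V `\ i & #|` D| = k.-1.
    by apply: ex_fsubset_card; rewrite (card_fsetD1_pred iV (erefl _)); move: k0 kV; clear; lia.
  have iD : i \notin D by apply/negP => /(fsubsetP DV); rewrite !inE eqxx.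
  exists [fset i |` D]; split; last exact: cardfs1.
  split=> [|e f /fset1P -> /fset1P ->]; last by rewrite eqxx.
  rewrite fsub1set in_star fset1U1 andbT fsubUset fsub1set iV (fsubset_trans DV) ?fsubD1set //=.
  by rewrite cardfsU1 iD Dk add1n prednK.
move=> M [MY Md]; rewrite leqNgt; apply/negP => M2.
have /fset0Pn [e eM] : M != fset0 by rewrite -cardfs_gt0; move: M2; clear; lia.
have /fset0Pn [f /fsetD1P [fe fM]] : M `\ e != fset0.
  by rewrite -cardfs_gt0 (card_fsetD1_pred eM (erefl _)); move: M2; clear; lia.
have ie : i \in e by move: (fsubsetP MY _ eM); rewrite in_star => /and3P [].
have if_ : i \in f by move: (fsubsetP MY _ fM); rewrite in_star => /and3P [].
by move/fdisjointP: (Md _ _ fM eM fe) => /(_ i if_); rewrite ie.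
Qed.

Lemma ksubsets_star_split k T i : ksubsets k T = star k T i `|` ksubsets k (T `\ i).
Proof.
apply/fsetP => e; rewrite in_fsetU in_star !in_ksubsets.
have -> : (e `<=` T `\ i) = (e `<=` T) && (i \notin e).
  apply/idP/andP => [eTi|[eT ie]].
    split; first exact: fsubset_trans eTi (fsubD1set _ _).
    by apply: contra (fsubsetP eTi i) _; rewrite !inE eqxx.
  apply/fsubsetP => x xe; rewrite inE (fsubsetP eT _ xe) andbT in_fset1.
  by apply: contraTneq xe => ->.
by case: (e `<=` T); case: (#|` e| == k); case: (i \in e).
Qed.

(* Witnessed by the injective complement map e |-> {i, z} + (T \ e). *)
Lemma ex_star_image_ksubsets k V T i z : 1 < k -> T `<=` V -> #|` T| = (2 * k).-2 ->
  i \in V -> z \in V -> i \notin T -> z \notin T -> i != z ->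
  exists2 G, G `<=` star k V i & #|` G| = #|` ksubsets k T| /\ forall e, e \in G -> z \in e.
Proof.
move=> k1 TV Tk iV zV iT zT iz.
pose g e := i |` (z |` (T `\` e)).
have g_star e : e \in ksubsets k T -> g e \in star k V i.
  rewrite in_ksubsets => /andP [eT /eqP ek]; rewrite in_star fset1U1 andbT.
  rewrite !fsubUset !fsub1set iV zV (fsubset_trans (fsubsetDl _ _)) //=.
  rewrite !cardfsU1 cardfsDS // Tk ek !inE negb_or iz (negPf zT) (negPf iT) !andbF /=.
  by apply/eqP; move: k1; clear; lia.
have g_inj : {in ksubsets k T &, injective g}.
  move=> e1 e2; rewrite !in_ksubsets => /andP [e1T _] /andP [e2T _] ge12.
  have Tg e : e `<=` T -> T `&` g e = T `\` e.
    move=> eT; apply/fsetP => x; rewrite !inE.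
    case: (x =P i) => [->|_] /=; first by rewrite (negPf iT) andbF.
    case: (x =P z) => [->|_] /=; first by rewrite (negPf zT) !andbF.
    by case: (x \in e); case: (x \in T).
  by rewrite -(fsetDK e1T) -(fsetDK e2T) -(Tg e1 e1T) -(Tg e2 e2T) ge12.
exists [fset g e | e in ksubsets k T].
  by apply/fsubsetP => _ /imfsetP [e /g_star ? ->].
split; first exact: card_in_imfset.
by move=> _ /imfsetP [e _ ->]; rewrite !inE eqxx orbT.
Qed.

(* Besides the image above, a second vertex z' outside T gives a star edge
   {i, z'} + D through neither z nor T. *)
Lemma card_ksubsets_lt_star k V T i : 1 < k -> 2 * k < #|` V| -> T `<=` V ->
  #|` T| = (2 * k).-1 -> i \in T -> #|` ksubsets k T| < #|` star k V i|.
Proof.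
move=> k1 kV TV Tk iT; have iV := fsubsetP TV _ iT.
have [z zVT] : exists z, z \in V `\` T.
  by apply/fset0Pn; rewrite -cardfs_gt0 cardfsDS // Tk; move: kV; clear; lia.
have [z' /fsetD1P [z'z z'VT]] : exists z', z' \in V `\` T `\ z.
  apply/fset0Pn; rewrite -cardfs_gt0 (card_fsetD1_pred zVT (erefl _)) cardfsDS // Tk.
  by move: k1 kV; clear; lia.
move: zVT z'VT; rewrite !inE => /andP [zT zV] /andP [z'T z'V].
have iz : i != z by apply: contraTneq iT => ->.
have iz' : i != z' by apply: contraTneq iT => ->.
have TiV : T `\ i `<=` V := fsubset_trans (fsubD1set _ _) TV.
have Tik : #|` T `\ i| = (2 * k).-2 by rewrite (card_fsetD1_pred iT Tk).
have zTi : z \notin T `\ i by rewrite inE (negPf zT) andbF.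
have [G Gstar [Gc zG]] := ex_star_image_ksubsets k1 TiV Tik iV zV (negbT (fsetD11 _ _)) zTi iz.
have TstarT e : e \in star k T i -> e `<=` T by rewrite in_star => /and3P [].
have [D DTi Dk] : exists2 D, D `<=` T `\ i & #|` D| = k.-2.
  by apply: ex_fsubset_card; rewrite Tik; move: k1; clear; lia.
pose h := i |` (z' |` D).
have h_star : h \in star k V i.
  rewrite in_star fset1U1 andbT !fsubUset !fsub1set iV z'V (fsubset_trans DTi) //=.
  have iD : i \notin D by apply/negP => /(fsubsetP DTi); rewrite !inE eqxx.
  have z'D : z' \notin D by apply/negP => /(fsubsetP DTi); rewrite inE (negPf z'T) andbF.
  rewrite !cardfsU1 Dk !inE negb_or iz' iD z'D /=.
  by apply/eqP; move: k1; clear; lia.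
have h_new : h \notin star k T i `|` G.
  rewrite inE negb_or; apply/andP; split.
    by apply: contraNN z'T => /TstarT /fsubsetP; apply; rewrite !inE eqxx orbT.
  apply/negP => /zG; rewrite !inE => /orP [/eqP zi|/orP [/eqP zz'|zD]].
  - by move: iz; rewrite zi eqxx.
  - by move: z'z; rewrite zz' eqxx.
  - by move: (fsubsetP DTi _ zD); rewrite inE (negPf zT) andbF.
have starG : [disjoint star k T i & G].
  by apply/fdisjointP => e /TstarT eT; apply: contraNN zT => /zG /(fsubsetP eT).
rewrite (ksubsets_star_split k T i); apply: leq_ltn_trans (leq_card_fsetU _ _).1 _.
have : h |` (star k T i `|` G) `<=` star k V i.
  rewrite fsubUset fsub1set h_star fsubUset Gstar andbT.
  by apply/fsubsetP => e; rewrite !in_star => /and3P [eT -> ->]; rewrite (fsubset_trans eT TV).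
by move/fsubset_leq_card; rewrite cardfsU1 h_new cardfsU_disjoint // Gc.
Qed.

Lemma cl_kneser_room s k : 0 < s -> (s = 1 -> k <= 1) -> 0 < k.-1 ->
  2 * k.-1 + 1 <= (k * s + k - 1).-1.
Proof.
move=> s0 s1k k1; have s2 : 1 < s by case: (s =P 1) => [/s1k|]; lia.
have : k * 2 <= k * s by exact: leq_mul.
lia.
Qed.

Lemma cl_matching_room s k : 0 < s -> 0 < k -> s.-1 * k <= (k * s + k - 1) - (k.-1 + k.-1).+1.
Proof. by case: s => [|s] // _ k0; rewrite mulnS mulnC /=; lia. Qed.

Section CliqueShift.
Variables (k s : nat) (T : {fset nat}) (F : {fset {fset nat}}) (i j : nat).
Hypotheses (ij : i != j) (shFT : sh i j F = ksubsets k T).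

Lemma clique_split_sub a : split_edge i j F a -> a `\ i `<=` T `\ i /\ #|` a `\ i| = k.-1.
Proof.
case/and4P => ia _; rewrite shFT in_ksubsets => /andP [aT /eqP ak] _.
by split; [exact: fsetSD | exact: card_fsetD1_pred].
Qed.

Lemma clique_split_mem a : split_edge i j F a -> i \in T /\ j \notin T.
Proof.
case/and4P => ia ja; rewrite shFT !in_ksubsets card_swapset swapset_ij // => /andP [aT ->].
rewrite andbT => jaT; split; first exact: fsubsetP aT _ ia.
by apply: contra jaT => jT; rewrite fsubUset fsub1set jT (fsubset_trans (fsubD1set _ _)).
Qed.

Hypotheses (k0 : 0 < k) (iT : i \in T) (jT : j \notin T).

Lemma clique_star_in_sh R : R `<=` T `\ i -> #|` R| = k.-1 -> i |` R \in sh i j F.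
Proof.
move=> RW Rk; have iR : i \notin R by apply: contra (fsubsetP RW i) _; rewrite !inE eqxx.
rewrite shFT in_ksubsets fsubUset fsub1set iT (fsubset_trans RW (fsubD1set _ _)).
by rewrite cardfsU1 iR Rk /= add1n prednK.
Qed.

Lemma clique_sh_matching_avoiding : 0 < s -> #|` T| = k * s + k - 1 ->
  forall Y, Y `<=` T `\ i -> #|` Y| = (k.-1 + k.-1)%N ->
  exists M, [/\ is_matching (sh i j F) M, #|` M| = s.-1
    & forall e, e \in M -> [disjoint i |` (j |` Y) & e]].
Proof.
move=> s0 Tc Y YW Yk; pose X := T `\` (i |` Y).
have iYT : i |` Y `<=` T by rewrite fsubUset fsub1set iT (fsubset_trans YW (fsubD1set _ _)).
have Xc : s.-1 * k <= #|` X|.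
  have iY : i \notin Y by apply: contra (fsubsetP YW i) _; rewrite !inE eqxx.
  by rewrite cardfsDS // cardfsU1 Yk iY Tc add1n; exact: cl_matching_room.
have [S SX Ss] := ex_fsubset_card (leq_trans (leq_pmulr _ k0) Xc).
have [M [Ms Me Md]] := ex_disjoint_ksubsets_meeting k0 SX Ss Xc.
exists M; split=> //.
  split=> //; apply/fsubsetP => e /Me [eX ek _].
  by rewrite shFT in_ksubsets (fsubset_trans eX (fsubsetDl _ _)) ek eqxx.
move=> e /Me [eX _ _]; apply/fdisjointP => y yZ; apply: contraTN yZ => /(fsubsetP eX).
rewrite !inE !negb_or => /andP [/andP [-> ->] yT] /=; rewrite andbT.
by apply: contraTneq yT => ->.
Qed.

End CliqueShift.

Lemma in_M_1_clique_absurd k n V F T i : 1 < k -> 2 * k < n -> in_M k n 1 V F ->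
  T `<=` V -> #|` T| = (2 * k).-1 -> i \in T -> #|` F| = #|` ksubsets k T| -> False.
Proof.
move=> k1 nk [[_ [nV _]] Fmax] TV Tk iT FT.
have k_small : k <= #|` V| by rewrite nV; move: nk; clear; lia.
have := Fmax V (star k V i); rewrite -nV FT leqNgt => /(_ (star_in_H (ltnW k1) (fsubsetP TV _ iT) k_small)).
by rewrite card_ksubsets_lt_star // nV.
Qed.

Lemma sh_Cl k n s V F i j : i != j -> i \in V -> j \in V -> in_M k n s V F -> n != 2 * k ->
  in_Cl k n s V (sh i j F) -> in_Cl k n s V F.
Proof.
move=> ij iV jV FM n2k shCl.
case: (ltnP n (s.+1 * k)) => [n_small|n_large].
  by move: shCl; rewrite (in_M_small FM n_small) sh_ksubsets.
case: (shift_trichotomy F ij) => [shF|shF|[a1 [a2 [sa1 a1F sa2 a2F]]]].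
- by rewrite -shF.
- exact: in_Cl_swapset iV jV shF shCl.
exfalso; case: shCl => nV [T [TV [Tc shFT]]].
have shF_eq : sh i j F = ksubsets k T.
  apply/fsetP => e; rewrite in_ksubsets.
  by apply/idP/andP => [/shFT [-> ->]|[eT /eqP ek]]; [|apply/shFT].
have [iT jT] := clique_split_mem ij shF_eq sa1.
have [[R1W R1k] [R2W R2k]] := (clique_split_sub shF_eq sa1, clique_split_sub shF_eq sa2).
have /and4P [ia1 _ a1sh _] := sa1; have /and4P [ia2 _ _ _] := sa2.
move: a1sh; rewrite shF_eq in_ksubsets => /andP [a1T /eqP a1k].
have k0 : 0 < k by rewrite -a1k cardfs_gt0; apply/fset0Pn; exists i.
have s0 : 0 < s.
  by case: (posnP s) => // s0; move: (fsubset_leq_card a1T); rewrite a1k Tc s0; move: k0; clear; lia.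
case: (boolP ((s == 1) && (1 < k))) => [/andP [/eqP s1 k1]|s1k].
  subst s; apply: (in_M_1_clique_absurd k1 _ FM TV _ iT).
  - by move: n_large n2k; clear; lia.
  - by rewrite Tc; move: k0; clear; lia.
  - by rewrite -(card_sh F ij) shF_eq.
case: FM => [[_ [_ [_ matching_le]]] _].
have iW : i \notin T `\ i by rewrite !inE eqxx.
have jW : j \notin T `\ i by rewrite inE (negPf jT) andbF.
have W_large : 0 < k.-1 -> 2 * k.-1 + 1 <= #|` T `\ i|.
  rewrite (card_fsetD1_pred iT Tc); apply: cl_kneser_room => // s1.
  by move: s1k; rewrite s1 eqxx /= -leqNgt.
have := star_in_F_constant ij iW jW matching_le W_large (clique_star_in_sh shF_eq k0 iT)
  (clique_sh_matching_avoiding shF_eq k0 iT jT s0 Tc) R1W R2W R1k R2k.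
by rewrite !fsetD1K // a1F (negPf a2F) => /(_ isT).
Qed.

Unset Implicit Arguments.

Theorem lemma6 (k n s : nat) (V : {fset nat}) (E : {fset {fset nat}})
  (ps : seq (nat * nat)) :
  in_M k n s V E ->
  valid_shifts V ps ->
  (forall i j, i \in V -> j \in V -> i < j -> sh i j (sh_seq ps E) = sh_seq ps E) ->
  [/\ in_M k n s V (sh_seq ps E),
      (n != 2 * k -> in_Cov k n s V (sh_seq ps E) -> in_Cov k n s V E) &
      (n != 2 * k -> in_Cl k n s V (sh_seq ps E) -> in_Cl k n s V E)].
Proof.
move=> + + _; elim: ps E => [|[i j] ps IH] E EM valid //=.
have [iV jV ij] := valid (i, j) (mem_head _ _).
have valid' : valid_shifts V ps by move=> p pps; apply: valid; rewrite in_cons pps orbT.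
have ij' : i != j by rewrite neq_ltn ij.
have [shM shCov shCl] := IH _ (sh_in_M ij' iV jV EM) valid'.
split=> // n2k.
- by move/(shCov n2k); apply: sh_Cov.
- by move/(shCl n2k); apply: sh_Cl.
Qed.
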